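(* Let $W=\coprod_{a\in\mathcal{A}}W^a$ with the data described below satisfy axioms (A1)–(A3) below, let $\mathcal{F}$, $\mathcal{B}$ be linear maps as described below, and suppose the Jacobi identity hypothesis (J) below holds, with maps $f_\alpha=f^{a_1,a_2,a_3,a_4}_\alpha$, $g_\alpha=g^{a_1,a_2,a_3,a_4}_\alpha$, $h_\alpha=h^{a_1,a_2,a_3,a_4}_\alpha$. Then (locality) for all $a_1,\dots,a_4\in\mathcal{A}$, $w_{(a_i)}\in W^{a_i}$ ($i=1,2,3$), $w'_{(a_4)}\in(W^{a_4})'$, $\mathcal{Z}\in\coprod_{a_5}\mathcal{V}_{a_1a_5}^{a_4}\otimes\mathcal{V}_{a_2a_3}^{a_5}$ and $\alpha\in\mathbb{A}(a_1,a_2,a_3,a_4)$, there exist $n_1,n_2\in\mathbb{N}$ such that $$(x_1-x_2)^{n_1}\langle w'_{(a_4)},f_\alpha(w_{(a_1)},w_{(a_2)},w_{(a_3)},[\mathcal{Z}]_P;x_1,x_2)\rangle=(x_1-x_2)^{n_1}\langle w'_{(a_4)},g_\alpha(w_{(a_1)},w_{(a_2)},w_{(a_3)},\mathcal{B}([\mathcal{Z}]_P);x_1,x_2)\rangle,$$ $$(x_0+x_2)^{n_2}\langle w'_{(a_4)},f_\alpha(w_{(a_1)},w_{(a_2)},w_{(a_3)},[\mathcal{Z}]_P;x_0+x_2,x_2)\rangle=(x_0+x_2)^{n_2}\langle w'_{(a_4)},h_\alpha(w_{(a_1)},w_{(a_2)},w_{(a_3)},\mathcal{F}([\mathcal{Z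}]_P);x_0,x_2)\rangle.$$
   Context: Conventions: standard notions of vertex operator algebras, modules, intertwining operators, $L(n)$, graded duals $W'$. $\log z=\log|z|+i\arg z$, $0\le\arg z<2\pi$. $\delta(x)=\sum_{n\in\mathbb{Z}}x^n$; negative powers of binomials are expanded in nonnegative powers of the second summand (e.g. $f(x_0+x_2,x_2)$ is expanded in nonnegative powers of $x_2$). Data: $W=\coprod_{a\in\mathcal{A}}W^a$, $\mathcal{A}$ finite containing $e$, a vertex operator algebra structure on $W^e$, $W^e$-module structures on all $W^a$, subspaces $\mathcal{V}_{a_1a_2}^{a_3}$ of intertwining operators of type $\binom{W^{a_3}}{W^{a_1}W^{a_2}}$. (A1) $W^e$ adjoint; $\mathcal{V}_{ea}^a$ spanned by the vertex operator of $W^a$; $\mathcal{V}_{ea_1}^{a_2}=0$ if $a_1\ne a_2$. (A2) $L(0)$-eigenvalues on $W^a$ lie in $h_a+\mathbb{Z}$, $h_a\in\mathbb{R}$. (A3) products $\langle w',\mathcal{Y}_1(w_{(a_1)},x_1)\cdots\mathcal{Y}_m(w_{(a_m)},x_m)w\rangle|_{x_i^n=e^{n\log z_i}}$, $\mathcal{Y}_i\in\mathcal{V}_{a_ib_{i+1}}^{b_i}$, converge absolutely on $|z_1|>\cdots>|z_m|>0$ and extend to multivalued analytic functions on $\{z_i\ne0,z_i\ne z_j\}$ with regular-singular-type expansions near $z_i=0,\infty$, $z_i=z_j$; iterates $\langle w',\mathcal{Y}_2(\mathcal{Y}_1(w_{(a_1)},x_0)w_{(a_2)},x_2)w_{(a_3)}\rangle|_{x_0^n=e^{n\log(z_1-z_2)},x_2^n=e^{n\log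 z_2}}$ converge absolutely on $|z_2|>|z_1-z_2|>0$. $\mathbf{P}$: linear map on $\coprod_{a_1..a_5}\mathcal{V}_{a_1a_5}^{a_4}\otimes\mathcal{V}_{a_2a_3}^{a_5}$ with $(\mathbf{P}(\mathcal{Y}_1\otimes\mathcal{Y}_2))(w_{(b_1)},w_{(b_2)},w_{(b_3)};x_1,x_2)=\mathcal{Y}_1(w_{(b_1)},x_1)\mathcal{Y}_2(w_{(b_2)},x_2)w_{(b_3)}$ if $(b_1,b_2,b_3)=(a_1,a_2,a_3)$, else $0$; $\mathbf{I}$: linear map on $\coprod\mathcal{V}_{a_1a_2}^{a_5}\otimes\mathcal{V}_{a_5a_3}^{a_4}$ with $(\mathbf{I}(\mathcal{Y}_1\otimes\mathcal{Y}_2))(w_{(b_1)},w_{(b_2)},w_{(b_3)};x_0,x_2)=\mathcal{Y}_2(\mathcal{Y}_1(w_{(b_1)},x_0)w_{(b_2)},x_2)w_{(b_3)}$ if $(b_1,b_2,b_3)=(a_1,a_2,a_3)$, else $0$. $\pi_P,\pi_I$: projections to the quotients by the kernels; $[\mathcal{Z}]_P=\pi_P(\mathcal{Z})$; $\tilde{\mathbf{P}},\tilde{\mathbf{I}}$: induced maps on quotients. $\mathcal{F}$: a linear map from the $\mathbf{P}$-quotient to the $\mathbf{I}$-quotient sending $\pi_P(\coprod_{a_5}\mathcal{V}_{a_1a_5}^{a_4}\otimes\mathcal{V}_{a_2a_3}^{a_5})$ into $\pi_I(\coprod_{a_5}\mathcal{V}_{a_1a_2}^{a_5}\otimes\mathcal{V}_{a_5a_3}^{a_4})$;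 $\mathcal{B}$: a linear map of the $\mathbf{P}$-quotient to itself sending $\pi_P(\coprod_{a_5}\mathcal{V}_{a_1a_5}^{a_4}\otimes\mathcal{V}_{a_2a_3}^{a_5})$ into $\pi_P(\coprod_{a_5}\mathcal{V}_{a_2a_5}^{a_4}\otimes\mathcal{V}_{a_1a_3}^{a_5})$ (in the paper: fusing and braiding isomorphisms). $\mathbb{G}^{a_1,a_2,a_3,a_4}$, its fixed basis $\{e_\alpha\}_{\alpha\in\mathbb{A}(a_1,\dots,a_4)}$ and the maps $\iota_{12},\iota_{21},\iota_{20}$: with $M^2=\{z_1,z_2\ne0,z_1\ne z_2\}$, $R_1,R_2$ the regions $|z_1|>|z_2|>0$, $|z_2|>|z_1|>0$ minus points with $z_1\in[0,\infty)$ or $z_2\in[0,\infty)$, $R_3$ the region $|z_2|>|z_1-z_2|>0$ minus points with $z_2$ or $z_1-z_2\in[0,\infty)$, $R_4$ the region $|z_1|>|z_1-z_2|>0$ minus points with $z_1$ or $z_2-z_1\in[0,\infty)$: $\mathbb{G}^{a_1,\dots,a_4}$ consists of multivalued analytic functions on $M^2$ with a chosen (preferred) branch on $R_1$ whose branches on $|z_1|>|z_2|>0$, $|z_2|>|z_1|>0$, $|z_2|>|z_1-z_2|>0$ expand as $\sum_a z_1^{h_{a_4}-h_{a_1}-h_a}z_2^{h_a-h_{a_2}-h_{a_3}}F_a$, $\sum_a z_2^{h_{a_4}-h_{a_2}-h_a}z_1^{h_a-h_{a_1}-h_{a_3}}G_a$, $\sum_a z_2^{h_{a_4}-h_a-h_{a_3}}(z_1-z_2)^{h_a-h_{a_1}-h_{a_2}}H_a$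 with $F_a\in\mathbb{C}[[z_2/z_1]][z_1^{\pm1},z_2^{\pm1}]$, $G_a\in\mathbb{C}[[z_1/z_2]][z_1^{\pm1},z_2^{\pm1}]$, $H_a\in\mathbb{C}[[(z_1-z_2)/z_2]][z_2^{\pm1},(z_1-z_2)^{\pm1}]$; preferred branches on $R_3,R_4$ are continuations of the $R_1$ one through $S_1=\{\mathrm{Re}\,z_1>\mathrm{Re}\,z_2>\mathrm{Re}(z_1-z_2)>0,\mathrm{Im}\,z_1>\mathrm{Im}\,z_2>\mathrm{Im}(z_1-z_2)>0\}$, and on $R_2$ the continuation of the $R_4$ one through $S_2=\{\mathrm{Re}\,z_2>\mathrm{Re}\,z_1>\mathrm{Re}(z_2-z_1)>0,\mathrm{Im}\,z_2>\mathrm{Im}\,z_1>\mathrm{Im}(z_2-z_1)>0\}$. It is a free module over $\mathbb{C}[x_1^{\pm1},x_2^{\pm1},(x_1-x_2)^{-1}]$ with a fixed basis $e_\alpha$; $\iota_{12},\iota_{21},\iota_{20}$ give the formal expansions of the preferred branches on $R_1,R_2,R_3$ (variables $x_1,x_2$; $x_1,x_2$; $x_0=z_1-z_2,x_2$). (J) There exist linear maps $f_\alpha:W^{a_1}\otimes W^{a_2}\otimes W^{a_3}\otimes\pi_P(\coprod_{a_5}\mathcal{V}_{a_1a_5}^{a_4}\otimes\mathcal{V}_{a_2a_3}^{a_5})\to W^{a_4}[[x_2/x_1]][x_1^{\pm1},x_2^{\pm1}]$, $g_\alpha:W^{a_1}\otimes W^{a_2}\otimes W^{a_3}\otimes\pi_P(\coprod_{a_5}\mathcal{V}_{a_2a_5}^{a_4}\otimes\mathcal{V}_{a_1a_3}^{a_5})\to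 W^{a_4}[[x_1/x_2]][x_1^{\pm1},x_2^{\pm1}]$, $h_\alpha:W^{a_1}\otimes W^{a_2}\otimes W^{a_3}\otimes\pi_I(\coprod_{a_5}\mathcal{V}_{a_1a_2}^{a_5}\otimes\mathcal{V}_{a_5a_3}^{a_4})\to W^{a_4}[[x_0/x_2]][x_0^{\pm1},x_2^{\pm1}]$ such that for all $w_{(a_i)}$ and $\mathcal{Z}\in\coprod_{a_5}\mathcal{V}_{a_1a_5}^{a_4}\otimes\mathcal{V}_{a_2a_3}^{a_5}$: only finitely many of $f_\alpha(\dots,[\mathcal{Z}]_P)$, $g_\alpha(\dots,\mathcal{B}([\mathcal{Z}]_P))$, $h_\alpha(\dots,\mathcal{F}([\mathcal{Z}]_P))$ are nonzero; $(\tilde{\mathbf{P}}([\mathcal{Z}]_P))(w_{(a_1)},w_{(a_2)},w_{(a_3)};x_1,x_2)=\sum_\alpha f_\alpha(w_{(a_1)},w_{(a_2)},w_{(a_3)},[\mathcal{Z}]_P;x_1,x_2)\iota_{12}(e_\alpha)$; $(\tilde{\mathbf{P}}(\mathcal{B}([\mathcal{Z}]_P)))(w_{(a_2)},w_{(a_1)},w_{(a_3)};x_2,x_1)=\sum_\alpha g_\alpha(w_{(a_1)},w_{(a_2)},w_{(a_3)},\mathcal{B}([\mathcal{Z}]_P);x_1,x_2)\iota_{21}(e_\alpha)$; $(\tilde{\mathbf{I}}(\mathcal{F}([\mathcal{Z}]_P)))(w_{(a_1)},w_{(a_2)},w_{(a_3)};x_0,x_2)=\sum_\alpha h_\alpha(w_{(a_1)},w_{(a_2)},w_{(a_3)},\mathcal{F}([\mathcal{Z}]_P);x_0,x_2)\iota_{20}(e_\alpha)$;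 and $x_0^{-1}\delta(\frac{x_1-x_2}{x_0})f_\alpha(\dots;x_1,x_2)-x_0^{-1}\delta(\frac{x_2-x_1}{-x_0})g_\alpha(\dots;x_1,x_2)=x_2^{-1}\delta(\frac{x_1-x_0}{x_2})h_\alpha(\dots;x_0,x_2)$ for each $\alpha$. *)

From HB Require Import structures.
From mathcomp Require Import all_boot all_order all_algebra.
From Stdlib Require Import ClassicalEpsilon.
Set Implicit Arguments. Unset Strict Implicit. Unset Printing Implicit Defensive.
Import Order.TTheory GRing.Theory Num.Theory.
Local Open Scope ring_scope.

(* A formal series in two variables (x1,x2) or (x0,x2): coefficient of x^i y^j. *)
Definition series2 (V : Type) := int -> int -> V.
(* A formal series in (x0,x1,x2): coefficient of x0^k x1^i x2^j. *)
Definition series3 (V : Type) := int -> int -> int -> V.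

(* V[[x2/x1]][x1^{+-1},x2^{+-1}] : powers of x2 bounded below, total degree in a finite range *)
Definition in_ser12 (V : zmodType) (f : series2 V) : Prop :=
  exists N L M : int, forall i j, f i j <> 0 -> N <= j /\ L <= i + j <= M.
(* V[[x1/x2]][x1^{+-1},x2^{+-1}] *)
Definition in_ser21 (V : zmodType) (g : series2 V) : Prop :=
  exists N L M : int, forall i j, g i j <> 0 -> N <= i /\ L <= i + j <= M.
(* V[[x0/x2]][x0^{+-1},x2^{+-1}] (first index: power of x0, second: power of x2) *)
Definition in_ser20 (V : zmodType) (h : series2 V) : Prop :=
  exists N L M : int, forall k j, h k j <> 0 -> N <= k /\ L <= k + j <= M.

(* generalized binomial coefficient binom(n, m) for n : int, m : nat *)
Definition zbinom (n : int) (m : nat) : int :=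
  match n with
  | Posz k => ('C(k, m))%:Z
  | Negz k => (-1) ^+ m * ('C(k + m, m))%:Z
  end.

(* sum of a finitely supported family indexed by nat (0 if not finitely supported) *)
Definition fsum (V : zmodType) (u : nat -> V) : V :=
  match excluded_middle_informative (exists K : nat, forall m, (K <= m)%N -> u m = 0) with
  | left H => \sum_(m < proj1_sig (constructive_indefinite_description _ H)) u m
  | right _ => 0
  end.

(* coefficient of x0^k x1^i x2^j in x0^{-1} delta((x1-x2)/x0) f(x1,x2) *)
Definition jac1 (V : zmodType) (f : series2 V) : series3 V := fun k i j =>
  let n := - k - 1 in
  fsum (fun m : nat => f (i - n + m%:Z) (j - m%:Z) *~ (zbinom n m * (-1) ^+ m)).

(* coefficient of x0^k x1^i x2^j in x0^{-1} delta((x2-x1)/(-x0)) g(x1,x2) *)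
Definition jac2 (V : zmodType) (g : series2 V) : series3 V := fun k i j =>
  let n := - k - 1 in
  fsum (fun m : nat =>
    g (i - m%:Z) (j - n + m%:Z) *~ ((-1) ^+ `|n|%N * zbinom n m * (-1) ^+ m)).

(* coefficient of x0^k x1^i x2^j in x2^{-1} delta((x1-x0)/x2) h(x0,x2) *)
Definition jac3 (V : zmodType) (h : series2 V) : series3 V := fun k i j =>
  fsum (fun m : nat =>
    h (k - m%:Z) (j + i + m%:Z + 1) *~ (zbinom (i + m%:Z) m * (-1) ^+ m)).

(* the Jacobi identity
   x0^{-1}d((x1-x2)/x0) f(x1,x2) - x0^{-1}d((x2-x1)/(-x0)) g(x1,x2)
     = x2^{-1}d((x1-x0)/x2) h(x0,x2) *)
Definition jacobi (V : zmodType) (f g h : series2 V) : Prop :=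
  forall k i j, jac1 f k i j - jac2 g k i j = jac3 h k i j.

Definition mul_x1mx2 (V : zmodType) (n : nat) (F : series2 V) : series2 V := fun i j =>
  \sum_(m < n.+1) F (i - n%:Z + m%:Z) (j - m%:Z) *~ (('C(n, m))%:Z * (-1) ^+ m).

Definition mul_x0px2 (V : zmodType) (n : nat) (F : series2 V) : series2 V := fun p q =>
  \sum_(m < n.+1) F (p - n%:Z + m%:Z) (q - m%:Z) *~ ('C(n, m))%:Z.

(* F(x0 + x2, x2), (x0+x2)^i expanded in nonnegative powers of x2 *)
Definition subst_x0px2 (V : zmodType) (F : series2 V) : series2 V := fun p q =>
  fsum (fun m : nat => F (p + m%:Z) (q - m%:Z) *~ zbinom (p + m%:Z) m).

Definition pair2 (K : fieldType) (V : lmodType K) (w' : V -> K) (F : series2 V)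
  : series2 K := fun i j => w' (F i j).

From HB Require Import structures.
From mathcomp Require Import all_boot all_order all_algebra zify ring.
From Stdlib Require Import ClassicalEpsilon FunctionalExtensionality.
Set Implicit Arguments. Unset Strict Implicit. Unset Printing Implicit Defensive.
Import Order.TTheory GRing.Theory Num.Theory.
Local Open Scope ring_scope.

(* Both conclusions are residues of the Jacobi identity.  Taking the
   coefficient of x0^n (n >= 0) extracts (x1 - x2)^n f from the first
   delta-term and (x1 - x2)^n g from the second, while the right-hand side
   vanishes once n exceeds the pole order of h in x0: this is locality.
   Taking the coefficient of x1^(-n-1) instead kills the g-term (no poles of
   g in x1 beyond a fixed order), turns the f-term into (x0 + x2)^n f(x0 + x2, x2)
   and the h-term into (x0 + x2)^n h(x0, x2): this is associativity. *)

Lemma big_ord_trunc (V : zmodType) (u : nat -> V) (K K' : nat) :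
  (K <= K')%N -> (forall m, (K <= m)%N -> u m = 0) ->
  \sum_(m < K') u m = \sum_(m < K) u m.
Proof.
move=> leKK' u0; rewrite -!(big_mkord xpredT) (big_cat_nat (n := K)) //=.
rewrite [X in _ + X]big1_seq ?addr0 // => m.
by rewrite mem_index_iota => /andP[_ /andP[leKm _]]; apply: u0.
Qed.

Lemma fsumE (V : zmodType) (u : nat -> V) (K : nat) :
  (forall m, (K <= m)%N -> u m = 0) -> fsum u = \sum_(m < K) u m.
Proof.
move=> u0; rewrite /fsum; case: excluded_middle_informative => [fin|]; last first.
  by case; exists K.
case: (constructive_indefinite_description _ fin) => K0 /= u0'.
rewrite -(@big_ord_trunc _ u K (maxn K K0)) ?leq_maxl //.
by rewrite -(@big_ord_trunc _ u K0 (maxn K K0)) ?leq_maxr.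
Qed.

Lemma sum_pascal (V : zmodType) (B : nat -> V) (d e s : nat -> int) (K : nat) :
  (forall m, d m.+1 = e m.+1 + s m) -> d 0%N = e 0%N -> B K.+1 *~ s K = 0 ->
  \sum_(m < K.+1) B m *~ d m =
  \sum_(m < K.+1) B m *~ e m + \sum_(m < K.+1) B m.+1 *~ s m.
Proof.
move=> dS d0 sK.
rewrite big_ord_recl [X in _ = X + _]big_ord_recl [X in _ = _ + X]big_ord_recr /=.
rewrite sK addr0 d0 -addrA; congr (_ + _).
by rewrite -big_split /=; apply: eq_bigr => i _; rewrite dS mulrzDr.
Qed.

Lemma zbinom0 (n : int) : zbinom n 0 = 1.
Proof. by case: n => k /=; rewrite bin0 ?expr0 ?mul1r. Qed.

Lemma zbinomS (n : int) (m : nat) :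
  zbinom (n + 1) m.+1 = zbinom n m.+1 + zbinom n m.
Proof.
case: n => [k|[|k]].
- have -> : Posz k + 1 = Posz k.+1 by lia.
  by rewrite /= binS PoszD.
- have -> : Negz 0 + 1 = Posz 0 by [].
  by rewrite /= bin0n /= !add0n !binn exprS; ring.
- have -> : Negz k.+1 + 1 = Negz k by lia.
  rewrite /=.
  have -> : (k.+1 + m.+1 = (k + m.+1).+1)%N by lia.
  have -> : (k.+1 + m = k + m.+1)%N by lia.
  by rewrite binS PoszD exprS; ring.
Qed.

Lemma sqr_sign (m : nat) : (-1) ^+ m * (-1) ^+ m = 1 :> int.
Proof. by rewrite -expr2 sqrr_sign. Qed.

Lemma zbinomN (p : int) (m : nat) :
  zbinom (- p - 1) m * (-1) ^+ m = zbinom (p + m%:Z) m.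
Proof.
case: p => [a|a].
  have -> : - Posz a - 1 = Negz a by lia.
  have -> : Posz a + m%:Z = Posz (a + m) by lia.
  by rewrite /= mulrC mulrA sqr_sign mul1r.
have -> : - Negz a - 1 = Posz a by lia.
case: (leqP m a) => [lema|ltam].
  have -> : Negz a + m%:Z = Negz (a - m) by lia.
  by rewrite /= subnK // mulrC.
have -> : Negz a + m%:Z = Posz (m - a.+1) by lia.
by rewrite /= !bin_small ?mul0r //; lia.
Qed.

Lemma in_ser12_vanish (V : zmodType) (f : series2 V) :
  in_ser12 f -> exists N, forall i j, j < N -> f i j = 0.
Proof.
case=> N [L [M supp]]; exists N => i j ltjN; apply/eqP; apply: contraT => /eqP fij.
by have [leNj _] := supp _ _ fij; move: ltjN; rewrite ltNge leNj.
Qed.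

Lemma in_ser21_vanish (V : zmodType) (g : series2 V) :
  in_ser21 g -> exists N, forall i j, i < N -> g i j = 0.
Proof.
case=> N [L [M supp]]; exists N => i j ltiN; apply/eqP; apply: contraT => /eqP gij.
by have [leNi _] := supp _ _ gij; move: ltiN; rewrite ltNge leNi.
Qed.

Lemma in_ser20_vanish (V : zmodType) (h : series2 V) :
  in_ser20 h -> exists N, forall k j, k < N -> h k j = 0.
Proof. exact: in_ser21_vanish. Qed.

(* Index -n-1 in x0 (resp. x1) of a delta-term is the residue of x0^n (resp. x1^n)
   times it. *)

Lemma jac1_res_x0 (V : zmodType) (f : series2 V) (n : nat) :
  jac1 f (- n%:Z - 1) =2 mul_x1mx2 n f.
Proof.
move=> i j; rewrite /jac1 /=.
have -> : - (- n%:Z - 1) - 1 = n%:Z by lia.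
rewrite (@fsumE _ _ n.+1) => [|m ltnm]; last by rewrite /= bin_small ?mul0r ?mulr0z.
by apply: eq_bigr => m _; congr (f _ _ *~ _); lia.
Qed.

Lemma jac2_res_x0 (V : zmodType) (g : series2 V) (n : nat) :
  jac2 g (- n%:Z - 1) =2 mul_x1mx2 n g.
Proof.
move=> i j; rewrite /jac2 /=.
have -> : - (- n%:Z - 1) - 1 = n%:Z by lia.
rewrite (@fsumE _ _ n.+1) => [|m ltnm]; last first.
  by rewrite /zbinom bin_small // (_ : Posz 0 = 0) // mulr0 mul0r mulr0z.
rewrite /mul_x1mx2 (reindex_inj rev_ord_inj) /=; apply: eq_bigr => m _.
have ltmn := ltn_ord m.
have -> : (n.+1 - m.+1 = n - m)%N by lia.
rewrite bin_sub; last lia.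
have signE : (-1) ^+ n = (-1) ^+ (n - m) * (-1) ^+ m :> int.
  by rewrite -exprD subnK //; lia.
rewrite /zbinom /= signE; congr (g _ _ *~ _); try lia.
transitivity ((-1) ^+ (n - m) * (-1) ^+ (n - m) * ('C(n, m)%:Z * (-1) ^+ m)).
  by ring.
by rewrite sqr_sign mul1r.
Qed.

Lemma jac3_res_x0_vanish (V : zmodType) (h : series2 V) (N : int) :
  (forall k j, k < N -> h k j = 0) -> jac3 h (- `|N|%N%:Z - 1) =2 (fun _ _ => 0).
Proof.
move=> h0 i j; rewrite /jac3 (@fsumE _ _ 0) ?big_ord0 // => m _.
by rewrite h0 ?mul0rz //; lia.
Qed.

Lemma jacobi_locality (V : zmodType) (f g h : series2 V) :
  in_ser20 h -> jacobi f g h -> exists n, mul_x1mx2 n f = mul_x1mx2 n g.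
Proof.
move=> /in_ser20_vanish[N h0] jac; exists `|N|%N.
apply: functional_extensionality => i; apply: functional_extensionality => j.
have := jac (- `|N|%N%:Z - 1) i j.
by rewrite jac1_res_x0 jac2_res_x0 (jac3_res_x0_vanish h0) => /eqP; rewrite subr_eq0 => /eqP.
Qed.

(* Multiplication by x1 = x0 + x2 inside x0^-1 delta((x1-x2)/x0) f(x1,x2). *)
Lemma jac1_mulx1 (V : zmodType) (f : series2 V) (N : int) :
  (forall i j, j < N -> f i j = 0) ->
  forall k i j, jac1 f k (i - 1) j = jac1 f (k - 1) i j + jac1 f k i (j - 1).
Proof.
move=> f0 k i j; set K := `|j - N|%N.+1.
have far m : (K <= m)%N -> j - m%:Z < N.
  by move=> leKm; have := ler_norm (j - N); rewrite -abszE; lia.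
rewrite /jac1 /= !(@fsumE _ _ K.+1); last first.
all: try by move=> m ltKm; rewrite f0 ?mul0rz //; have := far _ (ltnW ltKm); lia.
have -> : - (k - 1) - 1 = (- k - 1) + 1 by lia.
set n := - k - 1.
rewrite (@sum_pascal _ (fun m : nat => f (i - 1 - n + m%:Z) (j - m%:Z))
   (fun m => zbinom n m * (-1) ^+ m) (fun m => zbinom (n + 1) m * (-1) ^+ m)
   (fun m => zbinom n m * (-1) ^+ m)) /=.
- by congr (_ + _); apply: eq_bigr => m _; congr (f _ _ *~ _); lia.
- by move=> m; rewrite zbinomS exprS; ring.
- by rewrite !zbinom0.
- by rewrite f0 ?mul0rz //; apply: far.
Qed.

Lemma jac1_res_x1_0 (V : zmodType) (f : series2 V) :
  jac1 f ^~ (-1) =2 subst_x0px2 f.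
Proof.
move=> p q; rewrite /jac1 /subst_x0px2 /=; congr fsum.
by apply: functional_extensionality => m; rewrite zbinomN; congr (f _ _ *~ _); lia.
Qed.

Lemma mul_x0px2S (V : zmodType) (F : series2 V) (n : nat) (p q : int) :
  mul_x0px2 n.+1 F p q = mul_x0px2 n F (p - 1) q + mul_x0px2 n F p (q - 1).
Proof.
rewrite /mul_x0px2 (@sum_pascal _ (fun m : nat => F (p - n.+1%:Z + m%:Z) (q - m%:Z))
   (fun m => ('C(n.+1, m))%:Z) (fun m => ('C(n, m))%:Z) (fun m => ('C(n, m))%:Z)) /=.
- rewrite [X in X + _ = _]big_ord_recr [X in _ + X = _]big_ord_recr /=.
  rewrite bin_small // !mulr0z !addr0.
  by congr (_ + _); apply: eq_bigr => m _; congr (F _ _ *~ _); lia.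
- by move=> m; rewrite binS PoszD.
- by rewrite !bin0.
- by rewrite bin_small ?mulr0z.
Qed.

Lemma jac1_res_x1 (V : zmodType) (f : series2 V) (N : int) :
  (forall i j, j < N -> f i j = 0) ->
  forall n : nat, jac1 f ^~ (- n%:Z - 1) =2 mul_x0px2 n (subst_x0px2 f).
Proof.
move=> f0; elim=> [|n IHn] p q.
  rewrite jac1_res_x1_0 /mul_x0px2 big_ord1 /= bin0 mulr1z.
  by congr (subst_x0px2 f _ _); lia.
have -> : - n.+1%:Z - 1 = (- n%:Z - 1) - 1 by lia.
by rewrite (jac1_mulx1 f0) !IHn mul_x0px2S.
Qed.

Lemma jac2_res_x1_vanish (V : zmodType) (g : series2 V) (N : int) :
  (forall i j, i < N -> g i j = 0) -> jac2 g ^~ (- `|N|%N%:Z - 1) =2 (fun _ _ => 0).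
Proof.
move=> g0 p q; rewrite /jac2 (@fsumE _ _ 0) ?big_ord0 // => m _.
by rewrite g0 ?mul0rz //; lia.
Qed.

Lemma jac3_res_x1 (V : zmodType) (h : series2 V) (n : nat) :
  jac3 h ^~ (- n%:Z - 1) =2 mul_x0px2 n h.
Proof.
move=> p q; rewrite /jac3 /mul_x0px2 (@fsumE _ _ n.+1) => [|m ltnm]; last first.
  have -> : - n%:Z - 1 + m%:Z = Posz (m - n.+1) by lia.
  by rewrite /= bin_small ?mul0r ?mulr0z //; lia.
rewrite (reindex_inj rev_ord_inj) /=; apply: eq_bigr => m _.
have ltmn := ltn_ord m.
have -> : - n%:Z - 1 + (n.+1 - m.+1)%N%:Z = Negz m by lia.
rewrite /=.
have -> : (n.+1 - m.+1 = n - m)%N by lia.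
have -> : (m + (n - m) = n)%N by lia.
rewrite mulrAC sqr_sign mul1r bin_sub; last lia.
by congr (h _ _ *~ _); lia.
Qed.

Lemma jacobi_associativity (V : zmodType) (f g h : series2 V) :
  in_ser12 f -> in_ser21 g -> jacobi f g h ->
  exists n, mul_x0px2 n (subst_x0px2 f) = mul_x0px2 n h.
Proof.
move=> /in_ser12_vanish[Nf f0] /in_ser21_vanish[Ng g0] jac; exists `|Ng|%N.
apply: functional_extensionality => p; apply: functional_extensionality => q.
have := jac p (- `|Ng|%N%:Z - 1) q.
by rewrite (jac1_res_x1 f0) jac3_res_x1 (jac2_res_x1_vanish g0) subr0.
Qed.

Section Pairing.
Variables (K : fieldType) (V : lmodType K) (w' : V -> K).
Hypothesis w'_linear : forall (c : K) (u v : V), w' (c *: u + v) = c * w' u + w' v.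

Lemma pairing0 : w' 0 = 0.
Proof.
have := w'_linear 1 0 0; rewrite scale1r addr0 mul1r => w'00.
by apply: (@addrI _ (w' 0)); rewrite addr0 -w'00.
Qed.

Lemma pairingD : {morph w' : u v / u + v}.
Proof. by move=> u v; rewrite -(scale1r u) w'_linear mul1r scale1r. Qed.

Lemma pairingMz (u : V) (z : int) : w' (u *~ z) = w' u *~ z.
Proof. by rewrite -scaler_int -(addr0 (_ *: _)) w'_linear pairing0 addr0 mulrzl. Qed.

Lemma pair2_mul_x1mx2 (n : nat) (F : series2 V) :
  mul_x1mx2 n (pair2 w' F) = pair2 w' (mul_x1mx2 n F).
Proof.
apply: functional_extensionality => i; apply: functional_extensionality => j.
rewrite /pair2 /mul_x1mx2 (big_morph w' pairingD pairing0).
by apply: eq_bigr => m _; rewrite pairingMz.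
Qed.

Lemma pair2_mul_x0px2 (n : nat) (F : series2 V) :
  mul_x0px2 n (pair2 w' F) = pair2 w' (mul_x0px2 n F).
Proof.
apply: functional_extensionality => i; apply: functional_extensionality => j.
rewrite /pair2 /mul_x0px2 (big_morph w' pairingD pairing0).
by apply: eq_bigr => m _; rewrite pairingMz.
Qed.

End Pairing.
Theorem theorem3p4 (K : fieldType) (A : finType) (W : A -> lmodType K)
  (QP QI : A -> A -> A -> A -> Type)
  (Alpha : A -> A -> A -> A -> Type)
  (Fus : forall a1 a2 a3 a4, QP a1 a2 a3 a4 -> QI a1 a2 a3 a4)
  (Br : forall a1 a2 a3 a4, QP a1 a2 a3 a4 -> QP a2 a1 a3 a4)
  (f : forall a1 a2 a3 a4, Alpha a1 a2 a3 a4 ->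
         W a1 -> W a2 -> W a3 -> QP a1 a2 a3 a4 -> series2 (W a4))
  (g : forall a1 a2 a3 a4, Alpha a1 a2 a3 a4 ->
         W a1 -> W a2 -> W a3 -> QP a2 a1 a3 a4 -> series2 (W a4))
  (h : forall a1 a2 a3 a4, Alpha a1 a2 a3 a4 ->
         W a1 -> W a2 -> W a3 -> QI a1 a2 a3 a4 -> series2 (W a4))
  (f_supp : forall a1 a2 a3 a4 al w1 w2 w3 z,
      in_ser12 (@f a1 a2 a3 a4 al w1 w2 w3 z))
  (g_supp : forall a1 a2 a3 a4 al w1 w2 w3 z,
      in_ser21 (@g a1 a2 a3 a4 al w1 w2 w3 z))
  (h_supp : forall a1 a2 a3 a4 al w1 w2 w3 z,
      in_ser20 (@h a1 a2 a3 a4 al w1 w2 w3 z))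
  (fin_f : forall a1 a2 a3 a4 w1 w2 w3 (z : QP a1 a2 a3 a4), exists s : seq (Alpha a1 a2 a3 a4),
      forall al, @f a1 a2 a3 a4 al w1 w2 w3 z <> (fun _ _ => 0) -> List.In al s)
  (fin_g : forall a1 a2 a3 a4 w1 w2 w3 (z : QP a1 a2 a3 a4), exists s : seq (Alpha a1 a2 a3 a4),
      forall al, @g a1 a2 a3 a4 al w1 w2 w3 (@Br a1 a2 a3 a4 z) <> (fun _ _ => 0) -> List.In al s)
  (fin_h : forall a1 a2 a3 a4 w1 w2 w3 (z : QP a1 a2 a3 a4), exists s : seq (Alpha a1 a2 a3 a4),
      forall al, @h a1 a2 a3 a4 al w1 w2 w3 (@Fus a1 a2 a3 a4 z) <> (fun _ _ => 0) -> List.In al s)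
  (J : forall a1 a2 a3 a4 al w1 w2 w3 (z : QP a1 a2 a3 a4),
      jacobi (@f a1 a2 a3 a4 al w1 w2 w3 z)
             (@g a1 a2 a3 a4 al w1 w2 w3 (@Br a1 a2 a3 a4 z))
             (@h a1 a2 a3 a4 al w1 w2 w3 (@Fus a1 a2 a3 a4 z))) :
  forall (a1 a2 a3 a4 : A) (w1 : W a1) (w2 : W a2) (w3 : W a3)
         (w' : W a4 -> K),
    (forall (c : K) (u v : W a4), w' (c *: u + v) = c * w' u + w' v) ->
  forall (z : QP a1 a2 a3 a4) (al : Alpha a1 a2 a3 a4),
  exists n1 n2 : nat,
    mul_x1mx2 n1 (pair2 w' (@f a1 a2 a3 a4 al w1 w2 w3 z))
      = mul_x1mx2 n1 (pair2 w' (@g a1 a2 a3 a4 al w1 w2 w3 (@Br a1 a2 a3 a4 z)))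
    /\ mul_x0px2 n2 (pair2 w' (subst_x0px2 (@f a1 a2 a3 a4 al w1 w2 w3 z)))
      = mul_x0px2 n2 (pair2 w' (@h a1 a2 a3 a4 al w1 w2 w3 (@Fus a1 a2 a3 a4 z))).
Proof.
move=> a1 a2 a3 a4 w1 w2 w3 w' w'_linear z al.
set fz := @f a1 a2 a3 a4 al w1 w2 w3 z.
set gz := @g a1 a2 a3 a4 al w1 w2 w3 (@Br a1 a2 a3 a4 z).
set hz := @h a1 a2 a3 a4 al w1 w2 w3 (@Fus a1 a2 a3 a4 z).
have [n1 loc] : exists n, mul_x1mx2 n fz = mul_x1mx2 n gz.
  exact: jacobi_locality (h_supp _ _ _ _ _ _ _ _ _) (J _ _ _ _ _ _ _ _ _).
have [n2 assoc] : exists n, mul_x0px2 n (subst_x0px2 fz) = mul_x0px2 n hz.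
  exact: jacobi_associativity (f_supp _ _ _ _ _ _ _ _ _) (g_supp _ _ _ _ _ _ _ _ _)
    (J _ _ _ _ _ _ _ _ _).
exists n1, n2.
by rewrite !(pair2_mul_x1mx2 w'_linear) !(pair2_mul_x0px2 w'_linear) loc assoc.
Qed.
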